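(* Let $X$ be a locally convex space, let $T:X\rightrightarrows X^{*}$, and let $V\subset X$ with $V\cap D(T)\neq\emptyset$. Consider: (i) $T|_{V}\in\mathcal{M}(X)$ and $V$ identifies $T$; (ii) $T$ is $V$-representable and $V$ locates $T$; (iii) $T$ is $V$-representable and $V$-NI. Then (i) $\Rightarrow$ (ii) $\Rightarrow$ (iii). If, in addition, $V$ is algebraically open, then (i), (ii), (iii) are equivalent.
   Context: $(X,\tau)$ is a non-trivial Hausdorff locally convex space, $X^*$ its dual with weak-star topology $\omega^*$, $Z=X\times X^*$ with topology $\tau\times\omega^*$, $c(x,x^* )=\langle x,x^*\rangle$. Operators are identified with their graphs; $D(T)$ is the domain; $T|_V$ has graph $\operatorname{Graph}T\cap(V\times X^* )$. $\varphi_{T}(x,x^{*})=\sup\{\langle x,u^{*}\rangle+\langle u,x^{*}\rangle-\langle u,u^{*}\rangle\mid(u,u^{*})\in T\}$ ($\sup\emptyset=-\infty$); $[f\le g]=\{z\mid f(z)\le g(z)\}$. $\mathcal M(X)$: monotone operators with non-empty graph. $\mathscr R$: proper convex $\tau\times\omega^*$-lsc $h:Z\to\overline{\mathbb R}$ with $h\ge c$. $T$ is $V$-representable if $V\cap D(T)\ne\emptyset$ and there is $h\in\mathscr R$ with $[h=c]\cap(V\times X^* )=\operatorname{Graph}(T|_V)$. $V$ identifies $T$ if $[\varphi_{T|_V}\le c]\cap(V\times X^* )\subset\operatorname{Graph}T$; $V$ locates $T$ if $\operatorname{Pr}_X([\varphi_{T|_V}\le c])\cap V\subset D(T)$; $T$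 is $V$-NI if $\varphi_{T|_V}\ge c$ on $V\times X^*$. $V$ is algebraically open if $V$ equals its algebraic interior (core). *)

From HB Require Import structures.
From mathcomp Require Import all_boot all_order all_algebra.
From mathcomp Require Import all_classical all_reals all_analysis.
Set Implicit Arguments. Unset Strict Implicit. Unset Printing Implicit Defensive.
Import Order.TTheory GRing.Theory Num.Theory.
Local Open Scope classical_set_scope.
Local Open Scope ring_scope.

Section Dual.
Context {R : realType} {E : tvsType R}.

Record dual := Dual {
  dfun :> E -> R ;
  dfun_linear : forall (a : R) (x y : E), dfun (a *: x + y) = a * dfun x + dfun y ;
  dfun_cont : continuous (dfun : E -> R^o) }.

Definition cpl (z : E * dual) : R := z.2 z.1.

(** Closed sets of Z for the product topology tau × w^* (w^* = weak-star
    topology, whose basic neighbourhoods of x^* are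
    {u^* | forall a in s, |u^*(a) - x^*(a)| < eps}, s finite, eps > 0). *)
Definition tw_closed (S : set (E * dual)) : Prop :=
  forall z : E * dual, ~ S z ->
    exists U : set E, nbhs z.1 U /\
    exists (s : seq E) (eps : R), 0 < eps /\
      forall (x : E) (u : dual), U x ->
        (forall a, a \in s -> `|u a - z.2 a| < eps) -> ~ S (x, u).

Definition tw_lsc (h : E * dual -> \bar R) : Prop :=
  forall r : R, tw_closed [set z | (h z <= r%:E)%E].

Definition proper_fun (h : E * dual -> \bar R) : Prop :=
  (forall z, h z != -oo%E) /\ exists z, h z != +oo%E.

(** convexity of h (the convex combination in X^* is given pointwise). *)
Definition convex_fun (h : E * dual -> \bar R) : Prop :=
  forall (x1 x2 : E) (u1 u2 w : dual) (t : R), 0 < t < 1 ->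
    (forall a, w a = t * u1 a + (1 - t) * u2 a) ->
    (h ((t *: x1 + (1 - t) *: x2)%R, w) <= t%:E * h (x1, u1) + (1 - t)%:E * h (x2, u2))%E.

Definition repr_class (h : E * dual -> \bar R) : Prop :=
  [/\ proper_fun h, convex_fun h, tw_lsc h & forall z, ((cpl z)%:E <= h z)%E].

(** Operators T : X ⇉ X^* are identified with their graphs. *)
Definition dom (T : set (E * dual)) : set E := [set x | exists u, T (x, u)].
Definition prX (S : set (E * dual)) : set E := [set x | exists u, S (x, u)].
Definition restr (T : set (E * dual)) (V : set E) : set (E * dual) :=
  [set z | T z /\ V z.1].

(** Fitzpatrick function (sup of the empty set is -oo). *)
Definition fitz (T : set (E * dual)) (z : E * dual) : \bar R :=
  ereal_sup [set ((p.2 z.1 + z.2 p.1 - p.2 p.1)%:E)%E | p in T].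

Definition monotone_op (T : set (E * dual)) : Prop :=
  forall p q, T p -> T q -> 0 <= (p.2 (p.1 - q.1) - q.2 (p.1 - q.1)).

Definition in_M (T : set (E * dual)) : Prop := monotone_op T /\ T !=set0.

Definition V_representable (T : set (E * dual)) (V : set E) : Prop :=
  (V `&` dom T !=set0) /\
  exists h, repr_class h /\
    forall z : E * dual, (h z = (cpl z)%:E /\ V z.1) <-> restr T V z.

Definition V_identifies (V : set E) (T : set (E * dual)) : Prop :=
  forall z : E * dual, (fitz (restr T V) z <= (cpl z)%:E)%E -> V z.1 -> T z.

Definition V_locates (V : set E) (T : set (E * dual)) : Prop :=
  forall x, prX [set z | (fitz (restr T V) z <= (cpl z)%:E)%E] x -> V x -> dom T x.

Definition V_NI (T : set (E * dual)) (V : set E) : Prop :=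
  forall z : E * dual, V z.1 -> ((cpl z)%:E <= fitz (restr T V) z)%E.

Definition alg_open (V : set E) : Prop :=
  forall x, V x -> forall d : E, exists2 delta : R, 0 < delta &
    forall t : R, 0 <= t <= delta -> V (x + t *: d).

End Dual.
Arguments dual R E : clear implicits.

From HB Require Import structures.
From mathcomp Require Import all_boot all_order all_algebra.
From mathcomp Require Import all_classical all_reals all_analysis.
From mathcomp Require Import ring lra.
Import Order.TTheory GRing.Theory Num.Theory.
Local Open Scope classical_set_scope.
Local Open Scope ring_scope.

(* Write [S := T|_V] and [c z := <z.1, z.2>].
   (i) -> (ii): for monotone [S], the transposed Fenchel conjugate [psi] of
   [fitz S] is in the class [R], satisfies [psi >= fitz S] and [psi >= c], and
   equals [c] on [S]; so on [V x X^*] the set [[psi = c]] lies in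
   [[fitz S <= c]], hence in [T] because [V] identifies [T].
   (ii) -> (iii): if [fitz S (x, x^* ) < <x, x^*>] with [x] in [V], then [V]
   locates some [(x, u)] in [S], and that pair alone forces
   [fitz S (x, x^* ) >= <x, x^*>].
   (iii) -> (i): convexity of a representative [h] at midpoints of [S] gives
   monotonicity.  If [z = (x, x^* )] with [x] in [V] and [fitz S z <= c z] were
   not in [T], then [h z > c z], so [(z, c z)] is strictly separated from the
   epigraph of [h] by a functional continuous for [tau x w^* x R] (Hahn-Banach
   through a Minkowski gauge; its [X^*]-part is weak-star continuous, hence
   an evaluation).  Moving [z] a little in the direction given by this
   functional, which keeps its first component in [V] as [V] is algebraically
   open, yields a point of [V x X^*] where [fitz S < c], against [V]-NI. *)

Section ScalarFunctional.
Context {R : pzRingType} {U : lmodType R} {f : U -> R}.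
Hypothesis f_scalar : scalar f.

Lemma scalar_funD x y : f (x + y) = f x + f y.
Proof. by have := f_scalar 1 x y; rewrite scale1r mul1r. Qed.

Lemma scalar_funZ a x : f (a *: x) = a * f x.
Proof. exact: (scalable_linear f_scalar). Qed.

Lemma scalar_fun0 : f 0 = 0.
Proof. by have := scalar_funZ 0 0; rewrite scale0r mul0r. Qed.

Lemma scalar_funN x : f (- x) = - f x.
Proof. by rewrite -scaleN1r scalar_funZ mulN1r. Qed.

Lemma scalar_funB x y : f (x - y) = f x - f y.
Proof. by rewrite scalar_funD scalar_funN. Qed.

End ScalarFunctional.

Lemma near0_gt0 {R : realType} (P : set R) :
  (\forall t \near (0 : R^o), P t) -> exists2 t, 0 < t & P t.
Proof.
move/nbhs_ballP => [d /= d0 Hd]; exists (d / 2); first by rewrite divr_gt0.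
apply: Hd; rewrite /ball /= sub0r normrN gtr0_norm ?divr_gt0 //.
by rewrite ltr_pdivrMr // ltr_pMr // ltr1n.
Qed.

Section ConvexAbsorbing.
Context {R : realType} {V : lmodType R}.
Implicit Types (A : set V) (t : R).

Definition conv_closed A :=
  forall x y t, A x -> A y -> 0 <= t <= 1 -> A (t *: x + (1 - t) *: y).

Definition absorbing A := forall v, \forall t \near (0 : R^o), A (t *: v).

Lemma absorbing_gt0 {A} :
  absorbing A -> forall v, exists2 t, 0 < t & A (t *: v).
Proof. by move=> Aabs v; apply: near0_gt0. Qed.

Lemma absorbing0 {A} : absorbing A -> A 0.
Proof. by move=> /absorbing_gt0 /(_ 0) [t _]; rewrite scaler0. Qed.

Lemma conv_comb_const t (x : V) : t *: x + (1 - t) *: x = x.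
Proof. by rewrite -scalerDl addrC subrK scale1r. Qed.

Lemma conv_combB t (x1 y1 x2 y2 : V) :
  t *: (x1 - y1) + (1 - t) *: (x2 - y2) =
  (t *: x1 + (1 - t) *: x2) - (t *: y1 + (1 - t) *: y2).
Proof. by rewrite !scalerBr addrACA opprD. Qed.

Lemma conv_combD t (x1 y1 x2 y2 : V) :
  t *: (x1 + y1) + (1 - t) *: (x2 + y2) =
  (t *: x1 + (1 - t) *: x2) + (t *: y1 + (1 - t) *: y2).
Proof. by rewrite !scalerDr addrACA. Qed.

End ConvexAbsorbing.

Lemma conv_closedX {R : realType} {U W : lmodType R} (A : set U) (B : set W) :
  conv_closed A -> conv_closed B -> conv_closed (A `*` B).
Proof.
by move=> Ac Bc x y t [Ax1 Ax2] [Ay1 Ay2] t01; split; [exact: Ac | exact: Bc].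
Qed.

Lemma absorbingX {R : realType} {U W : lmodType R} (A : set U) (B : set W) :
  absorbing A -> absorbing B -> absorbing (A `*` B).
Proof. by move=> Aabs Babs v; apply: filterI; [exact: Aabs | exact: Babs]. Qed.

Lemma norm_conv_lt {R : realFieldType} (t x y e : R) : 0 <= t <= 1 ->
  `|x| < e -> `|y| < e -> `|t * x + (1 - t) * y| < e.
Proof.
move=> /andP[t0 t1] hx hy; apply: le_lt_trans (ler_normD _ _) _.
have t1' : 0 <= 1 - t by rewrite subr_ge0.
rewrite !normrM (ger0_norm t0) (ger0_norm t1').
have [->|tp] := eqVneq t 0; first by rewrite mul0r add0r subr0 mul1r.
have h1 : t * `|x| < t * e by rewrite ltr_pM2l // lt_neqAle eq_sym tp.
have h2 : (1 - t) * `|y| <= (1 - t) * e by rewrite ler_wpM2l ?subr_ge0 // ltW.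
lra.
Qed.

Lemma near_forall_seq {R : realType} {T : choiceType} (s : seq T)
    (P : T -> R -> Prop) :
  (forall a, \forall t \near (0 : R^o), P a t) ->
  \forall t \near (0 : R^o), {in s, forall a, P a t}.
Proof.
move=> H.
have := filter_forall (nbhs_filter (0 : R^o))
  (fun i : seq_sub s => H (ssval i)).
apply: filterS => t Ht a as_; exact: (Ht (SeqSub as_)).
Qed.

Section TvsAbsorbing.
Context {R : realType}.

Lemma nbhs0_absorbing (F : tvsType R) (N : set F) : nbhs 0 N -> absorbing N.
Proof.
move=> N0 u.
have : (fun t : R^o => t *: u) @ (0 : R^o) --> (0 : R^o) *: u.
  apply: (@continuous2_cvg _ R^o F F _ _ (fun t => t) (fun _ => u)
    (fun a b => a *: b)).
  - exact: (@scale_continuous R F (0, u)).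
  - exact: cvg_id.
  - exact: cvg_cst.
by rewrite scale0r; apply.
Qed.

Lemma norm_lt_absorbing {eps : R} :
  0 < eps -> absorbing [set x : R^o | `|x| < eps].
Proof.
move=> eps0; apply: nbhs0_absorbing; apply/nbhs_ballP; exists eps => //= x.
by rewrite /ball /= sub0r normrN.
Qed.

Lemma norm_lt_conv (eps : R) : conv_closed [set x : R^o | `|x| < eps].
Proof. by move=> x y t hx hy t01; exact: norm_conv_lt. Qed.

End TvsAbsorbing.

Section ScalarPair.
Context {R : realType} {U W : lmodType R} {F : U * W -> R}.
Hypothesis F_scalar : scalar F.

Lemma scalar_pairE x y : F (x, y) = F (x, 0) + F (0, y).
Proof.
rewrite -(scalar_funD F_scalar); congr F.
by congr (_, _); rewrite /= ?addr0 ?add0r.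
Qed.

Lemma scalar_pair_l : scalar (fun x => F (x, 0)).
Proof.
move=> c x y; rewrite -F_scalar; congr F.
by congr (_, _); rewrite /= ?scaler0 ?addr0.
Qed.

Lemma scalar_pair_r : scalar (fun y => F (0, y)).
Proof.
move=> c x y; rewrite -F_scalar; congr F.
by congr (_, _); rewrite /= ?scaler0 ?addr0.
Qed.

End ScalarPair.

(** * Hahn-Banach and separation in real vector spaces *)

Section HahnBanach.
Context {R : realType} {V : lmodType R} (p : V -> R).
Hypothesis p_ge0 : forall x, 0 <= p x.
Hypothesis pD : forall x y, p (x + y) <= p x + p y.
Hypothesis pZ : forall (a : R) x, 0 < a -> p (a *: x) = a * p x.
Variable y0 : V.
Hypothesis p_y0 : 1 <= p y0.

(* The alternative [G = set0] keeps the property closed under unions of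
   chains, while a maximal graph is forced through [(y0, 1)]. *)
Definition dominated_graph (G : set (V * R)) :=
  [/\ forall v r r', G (v, r) -> G (v, r') -> r = r',
      forall a v r w s, G (v, r) -> G (w, s) -> G (a *: v + w, a * r + s),
      forall v r, G (v, r) -> r <= p v &
      G = set0 \/ G (y0, 1)].

Lemma dominated_graph_bigcup (F : set (set (V * R))) :
  F `<=` dominated_graph -> total_on F subset ->
  dominated_graph (\bigcup_(X in F) X).
Proof.
move=> FG Ftot; split.
- move=> v r r' [X FX Xv] [Y FY Yv].
  have [XY|YX] := Ftot _ _ FX FY.
  + by have [f _ _ _] := FG _ FY; apply: f (XY _ Xv) Yv.
  + by have [f _ _ _] := FG _ FX; apply: f Xv (YX _ Yv).
- move=> a v r w s [X FX Xv] [Y FY Yw].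
  have [XY|YX] := Ftot _ _ FX FY.
  + have [_ l _ _] := FG _ FY; exists Y => //; exact: l (XY _ Xv) Yw.
  + have [_ l _ _] := FG _ FX; exists X => //; exact: l Xv (YX _ Yw).
- by move=> v r [X FX Xv]; have [_ _ d _] := FG _ FX; exact: d Xv.
- have [[X FX Xy]|nX] := pselect (exists2 X, F X & X (y0, 1)).
    by right; exists X.
  left; apply/seteqP; split => // z [X FX Xz].
  have [_ _ _ [X0|Xy]] := FG _ FX; first by rewrite X0 in Xz.
  by exfalso; apply: nX; exists X.
Qed.

Lemma sublinear0 : p 0 = 0.
Proof. by have := pZ 2%:R (0 : V) (ltr0Sn R 1); rewrite scaler0 => e; lra. Qed.

Lemma dominated_graph_span :
  dominated_graph [set z | exists a : R, z = (a *: y0, a)].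
Proof.
have y0_neq0 : y0 != 0.
  by apply/eqP => y00; move: p_y0; rewrite y00 sublinear0 ler10.
split.
- move=> v r r' [a [-> ->]] [b [Hab ->]].
  apply/eqP; rewrite -subr_eq0; apply/eqP.
  have : (a - b) *: y0 == 0 by rewrite scalerBl Hab subrr.
  by rewrite scaler_eq0 (negbTE y0_neq0) orbF => /eqP.
- move=> c v r w s [a [-> ->]] [b [-> ->]].
  by exists (c * a + b); rewrite scalerDl scalerA.
- move=> v r [a [-> ->]].
  have [a0|a0] := ltP 0 a; last exact: le_trans a0 (p_ge0 _).
  by rewrite pZ // -[X in X <= _]mulr1 ler_wpM2l // ltW.
- by right; exists 1; rewrite scale1r.
Qed.

Section Extension.
Variable A : set (V * R).
Hypothesis A_dom : dominated_graph A.
Hypothesis A_y0 : A (y0, 1).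
Variable v : V.
Hypothesis A_v : forall r, ~ A (v, r).

Let A_fun {w r r'} : A (w, r) -> A (w, r') -> r = r'.
Proof. by case: A_dom => + _ _ _; apply. Qed.

Let A_lin a {w r w' r'} : A (w, r) -> A (w', r') ->
  A (a *: w + w', a * r + r').
Proof. by case: A_dom => _ + _ _; apply. Qed.

Let A_le {w r} : A (w, r) -> r <= p w.
Proof. by case: A_dom => _ _ + _; apply. Qed.

Let A00 : A (0, 0).
Proof.
by have := A_lin (-1) A_y0 A_y0; rewrite scaleN1r addNr mulN1r addNr.
Qed.

Let A_scale a {w r} : A (w, r) -> A (a *: w, a * r).
Proof. by move=> Awr; have := A_lin a Awr A00; rewrite !addr0. Qed.

Let coeff_uniq {w r a w' r' a'} : A (w, r) -> A (w', r') ->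
  w + a *: v = w' + a' *: v -> a = a'.
Proof.
move=> Awr Awr' e; apply/eqP; apply: contraT => neq_aa'.
have aa0 : a - a' != 0 by rewrite subr_eq0.
have := A_scale (a - a')^-1 (A_lin (-1) Awr Awr').
have -> : (a - a')^-1 *: (-1 *: w + w') = v.
  apply: (scalerI aa0); rewrite scalerA divff // scale1r scaleN1r scalerBl.
  have -> : w' = w + a *: v - a' *: v by rewrite e addrK.
  by rewrite -[w + _ - _]addrA addKr.
by move=> /A_v.
Qed.

(* Such a [c] exists because [r + r' <= p (w + w') <= p (w - v) + p (w' + v)]
   whenever [A (w, r)] and [A (w', r')]. *)
Lemma extension_value : exists c : R,
  forall w r, A (w, r) -> r - p (w - v) <= c /\ c <= p (w + v) - r.
Proof.
pose L := [set x | exists w r, A (w, r) /\ x = r - p (w - v)].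
have key w1 r1 w2 r2 : A (w1, r1) -> A (w2, r2) ->
    r1 - p (w1 - v) <= p (w2 + v) - r2.
  move=> A1 A2; have := A_le (A_lin 1 A1 A2); rewrite scale1r mul1r => le1.
  have := pD (w1 - v) (w2 + v).
  by rewrite addrCA subrK addrC => le2; lra.
have Lne : L !=set0 by exists (1 - p (y0 - v)), y0, 1.
have Lub : has_ubound L.
  by exists (p (y0 + v) - 1) => x [w [r [Awr ->]]]; exact: key.
exists (sup L) => w r Awr; split.
  by apply: ub_le_sup => //; exists w, r.
by apply: ge_sup => // x [w' [r' [Awr' ->]]]; exact: key.
Qed.

Lemma dominated_graph_extend : exists2 A', dominated_graph A' & A `<` A'.
Proof.
have [c c_ok] := extension_value.
pose A' :=
  [set z | exists w r (a : R), A (w, r) /\ z = (w + a *: v, r + a * c)].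
exists A'; last first.
  split.
    by move=> [w r] Awr; exists w, r, 0; rewrite scale0r mul0r !addr0.
  move=> /(_ (v, c)) AA; apply: (A_v c); apply: AA.
  by exists 0, 0, 1; rewrite scale1r mul1r !add0r.
split.
- move=> x r r' [w [s [a [Aws [-> ->]]]]] [w' [s' [a' [Aws' [e ->]]]]].
  have aa' := coeff_uniq Aws Aws' e; subst a'.
  by move/addIr: e => ww'; subst w'; rewrite (A_fun Aws Aws').
- move=> b x r y s [w [r1 [a [A1 [-> ->]]]]] [w' [r2 [a' [A2 [-> ->]]]]].
  exists (b *: w + w'), (b * r1 + r2), (b * a + a'); split; first exact: A_lin.
  by congr (_, _); [rewrite scalerDr scalerA scalerDl addrACA | ring].
- move=> x r [w [s [a [Aws [-> ->]]]]].
  have [a0|a0|->] := ltgtP a 0;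
    last by rewrite scale0r mul0r !addr0; exact: A_le.
  + have b0 : 0 < - a by rewrite oppr_gt0.
    have [+ _] := c_ok _ _ (A_scale (- a)^-1 Aws).
    have -> : (- a)^-1 *: w - v = (- a)^-1 *: (w + a *: v).
      by rewrite scalerDr scalerA invrN mulNr mulVf ?lt_eqF // scaleN1r.
    rewrite pZ ?invr_gt0 // => h.
    have := ler_wpM2l (ltW b0) h.
    by rewrite mulrBr !mulrA mulfV ?gt_eqF // !mul1r; lra.
  + have [_ +] := c_ok _ _ (A_scale a^-1 Aws).
    have -> : a^-1 *: w + v = a^-1 *: (w + a *: v).
      by rewrite scalerDr scalerA mulVf ?gt_eqF // scale1r.
    rewrite pZ ?invr_gt0 // => h.
    have := ler_wpM2l (ltW a0) h.
    by rewrite mulrBr !mulrA mulfV ?gt_eqF // !mul1r; lra.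
- by right; exists y0, 1, 0; rewrite scale0r mul0r !addr0.
Qed.

End Extension.

Theorem hahn_banach : exists F : V -> R,
  [/\ scalar F, forall x, F x <= p x & F y0 = 1].
Proof.
have [A [A_dom Amax]] := Zorn_bigcup dominated_graph_bigcup.
have A_y0 : A (y0, 1).
  case: (A_dom) => _ _ _ [A0|//]; exfalso.
  apply: (Amax _ _ dominated_graph_span); rewrite A0.
  split; first exact: sub0set.
  by move=> /(_ (0 *: y0, 0)); apply; exists 0.
have A_tot v : exists r, A (v, r).
  apply: contrapT => nv.
  have [|A' A'dom AA'] := @dominated_graph_extend A A_dom A_y0 v.
    by move=> r Avr; apply: nv; exists r.
  exact: Amax AA' A'dom.
have [A_fun A_lin A_le _] := A_dom.
pose F v := projT1 (cid (A_tot v)).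
have FA v : A (v, F v) by rewrite /F; case: cid.
exists F; split.
- move=> a x y; apply: A_fun (FA (a *: x + y)) _.
  exact: A_lin _ _ _ _ _ (FA x) (FA y).
- by move=> x; exact: A_le (FA x).
- exact: A_fun (FA y0) A_y0.
Qed.

End HahnBanach.

Section Gauge.
Context {R : realType} {V : lmodType R} (C : set V).
Hypotheses (C_conv : conv_closed C) (C_abs : absorbing C).

Local Notation gauge_set v := [set t : R | 0 < t /\ C (t^-1 *: v)].

Definition gauge v := inf (gauge_set v).

Let gauge_set_ne v : gauge_set v !=set0.
Proof.
have [t t0 Ct] := absorbing_gt0 C_abs v.
by exists t^-1; split; [rewrite invr_gt0 | rewrite invrK].
Qed.

Let gauge_set_lb v : has_lbound (gauge_set v).
Proof. by exists 0 => t [t0 _]; exact: ltW. Qed.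

Let gauge_set_inf v : has_inf (gauge_set v).
Proof. by split; [exact: gauge_set_ne | exact: gauge_set_lb]. Qed.

Lemma gauge_ge0 v : 0 <= gauge v.
Proof. by apply: lb_le_inf => // t [t0 _]; exact: ltW. Qed.

Lemma gauge_le1 v : C v -> gauge v <= 1.
Proof.
move=> Cv; apply: ge_inf => //.
by split; [exact: ltr01 | rewrite invr1 scale1r].
Qed.

Lemma gauge_lt1 v : gauge v < 1 -> C v.
Proof.
move=> /(inf_lt (gauge_set_ne v)) [t [t0 Ct] t1].
have := C_conv _ _ t Ct (absorbing0 C_abs).
rewrite scaler0 addr0 scalerA mulfV ?gt_eqF // scale1r; apply.
by rewrite (ltW t0) (ltW t1).
Qed.

Let gauge_scale_le a v : 0 < a -> gauge (a *: v) <= a * gauge v.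
Proof.
move=> a0; apply/ler_addgt0Pr => e e0.
have ea : 0 < e / a by rewrite divr_gt0.
have [s [s0 Cs] slt] := inf_adherent ea (gauge_set_inf v).
have Has : gauge_set (a *: v) (a * s).
  split; first by rewrite mulr_gt0.
  by rewrite scalerA invfM mulrAC mulVf ?gt_eqF // mul1r.
apply: le_trans (ge_inf (gauge_set_lb _) Has) _.
have := ler_wpM2l (ltW a0) (ltW slt).
by rewrite mulrDr mulrCA mulfV ?gt_eqF // mulr1.
Qed.

Lemma gaugeZ a v : 0 < a -> gauge (a *: v) = a * gauge v.
Proof.
move=> a0; apply/le_anti; rewrite gauge_scale_le //=.
have := @gauge_scale_le a^-1 (a *: v); rewrite invr_gt0 => /(_ a0).
rewrite scalerA mulVf ?gt_eqF // scale1r => h.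
have := ler_wpM2l (ltW a0) h.
by rewrite mulrA mulfV ?gt_eqF // mul1r.
Qed.

Lemma gaugeD x y : gauge (x + y) <= gauge x + gauge y.
Proof.
apply/ler_addgt0Pr => e e0.
have e2 : 0 < e / 2 by rewrite divr_gt0.
have [s [s0 Cs] slt] := inf_adherent e2 (gauge_set_inf x).
have [t [t0 Ct] tlt] := inf_adherent e2 (gauge_set_inf y).
have st0 : 0 < s + t by rewrite addr_gt0.
have Hst : gauge_set (x + y) (s + t).
  split => //.
  have -> : (s + t)^-1 *: (x + y) =
      (s / (s + t)) *: (s^-1 *: x) + (1 - s / (s + t)) *: (t^-1 *: y).
    by rewrite !scalerA scalerDr; congr (_ *: _ + _ *: _); field;
      rewrite !gt_eqF.
  apply: C_conv => //; apply/andP; split; first by rewrite divr_ge0 // ltW.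
  by rewrite ler_pdivrMr // mul1r lerDl ltW.
apply: le_trans (ge_inf (gauge_set_lb _) Hst) _.
lra.
Qed.

Lemma gauge_separation y : ~ C y ->
  exists F : V -> R, [/\ scalar F, forall x, C x -> F x <= 1 & F y = 1].
Proof.
move=> nCy; have gy : 1 <= gauge y by rewrite leNgt; apply/negP => /gauge_lt1.
have [F [Fs Fle Fy]] := @hahn_banach _ _ gauge gauge_ge0 gaugeD gaugeZ y gy.
by exists F; split => // x Cx; exact: le_trans (Fle x) (gauge_le1 _ Cx).
Qed.

End Gauge.

(* For [k0] in [K], the set [C = K - (B + k0)] is convex, absorbing, and misses
   [z0 - k0]; separate them with [gauge_separation]. *)
Lemma separate_convex_absorbing {R : realType} {Z : lmodType R}
    {K B : set Z} {z0 : Z} :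
  conv_closed K -> K !=set0 -> conv_closed B -> absorbing B ->
  (forall b, B b -> B (- b)) -> (forall b, B b -> ~ K (z0 + b)) ->
  exists F : Z -> R, [/\ scalar F, forall b, B b -> `|F b| <= 1 &
    exists2 tau, 0 < tau & forall k, K k -> F k + tau <= F z0].
Proof.
move=> K_conv [k0 Kk0] B_conv B_abs B_sym KB.
pose C := [set y | exists k b, [/\ K k, B b & y = k - (b + k0)]].
have C_conv : conv_closed C.
  move=> _ _ t [k1 [b1 [K1 B1 ->]]] [k2 [b2 [K2 B2 ->]]] t01.
  exists (t *: k1 + (1 - t) *: k2), (t *: b1 + (1 - t) *: b2).
  rewrite conv_combB conv_combD conv_comb_const.
  by split; [exact: K_conv | exact: B_conv |].
have C_abs : absorbing C.
  move=> y; apply: filterS (B_abs (- y)) => t Bt.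
  exists k0, (t *: - y); split => //.
  by rewrite scalerN opprD opprK addrCA subrr addr0.
have CB b : B b -> C b.
  move=> Bb; exists k0, (- b); split; [done | exact: B_sym |].
  by rewrite opprD opprK addrCA subrr addr0.
have [|F [Fs FC Fz]] := @gauge_separation _ _ C C_conv C_abs (z0 - k0).
  move=> [k [b [Kk Bb e]]]; apply: (KB b Bb).
  by rewrite -[k](subrK (b + k0)) -e addrACA addNr addr0 in Kk.
exists F; split => //.
  move=> b Bb; rewrite ler_norml; have := FC _ (CB _ (B_sym _ Bb)).
  by rewrite (scalar_funN Fs) FC ?andbT; [rewrite lerNl|exact: CB].
have [tau tau0 Btau] := absorbing_gt0 B_abs (k0 - z0).
exists tau => // k Kk.
have Fk0 : F k0 = F z0 - 1 by move: Fz; rewrite (scalar_funB Fs); lra.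
have := FC _ (ex_intro _ k (ex_intro _ _ (And3 Kk Btau erefl))).
rewrite !(scalar_funB Fs, scalar_funD Fs, scalar_funN Fs, scalar_funZ Fs) Fk0.
lra.
Qed.

(** * The vector space of continuous linear functionals *)

Section DualFunctionals.
Context {R : realType} {E : tvsType R}.
Implicit Types (u v : dual R E) (x y : E).

Lemma dual_ext u v : (forall x, u x = v x) -> u = v.
Proof.
case: u => fu lu cu; case: v => fv lv cv /= h.
have e : fu = fv by apply: funext.
subst fv; have -> : lu = lv by exact: Prop_irrelevance.
by have -> : cu = cv by exact: Prop_irrelevance.
Qed.

Lemma dual_scalar u : scalar u.
Proof. exact: dfun_linear. Qed.

Lemma dual0 u : u 0 = 0.
Proof. by apply: scalar_fun0; exact: dual_scalar. Qed.

Lemma dualD u x y : u (x + y) = u x + u y.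
Proof. by apply: scalar_funD; exact: dual_scalar. Qed.

Lemma dualZ u a x : u (a *: x) = a * u x.
Proof. by apply: scalar_funZ; exact: dual_scalar. Qed.

Lemma dualN u x : u (- x) = - u x.
Proof. by apply: scalar_funN; exact: dual_scalar. Qed.

Lemma dualB u x y : u (x - y) = u x - u y.
Proof. by apply: scalar_funB; exact: dual_scalar. Qed.

Let lincomb_scalar a b u v : scalar (fun x => a * u x + b * v x).
Proof. by move=> c x y; rewrite !dualD !dualZ; ring. Qed.

Let lincomb_continuous a b u v :
  continuous ((fun x => a * u x + b * v x) : E -> R^o).
Proof.
move=> x.
apply: (@continuousD R R^o E (fun x => a * u x) (fun x => b * v x)).
  apply: (@continuousM R E (fun=> a) (fun x => u x)).
    exact: (@cst_continuous E R^o a x).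
  exact: dfun_cont.
apply: (@continuousM R E (fun=> b) (fun x => v x)).
  exact: (@cst_continuous E R^o b x).
exact: dfun_cont.
Qed.

Definition dual_lincomb a b u v : dual R E :=
  Dual (lincomb_scalar a b u v) (lincomb_continuous a b u v).

Lemma dual_lincombE a b u v x : dual_lincomb a b u v x = a * u x + b * v x.
Proof. by []. Qed.

Let zero_scalar : scalar (fun _ : E => 0 : R).
Proof. by move=> a x y /=; rewrite mulr0 addr0. Qed.

Let zero_continuous : continuous ((fun _ => 0) : E -> R^o).
Proof. by move=> x; exact: cst_continuous. Qed.

Definition dual_zero : dual R E := Dual zero_scalar zero_continuous.
Definition dual_add u v := dual_lincomb 1 1 u v.
Definition dual_opp u := dual_lincomb (-1) 0 u u.
Definition dual_scale a u := dual_lincomb a 0 u u.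

End DualFunctionals.

HB.instance Definition _ (R : realType) (E : tvsType R) :=
  gen_eqMixin (dual R E).
HB.instance Definition _ (R : realType) (E : tvsType R) :=
  gen_choiceMixin (dual R E).

Section DualLmodule.
Context {R : realType} {E : tvsType R}.
Implicit Types (u v w : dual R E) (a b : R).

Lemma dual_addA : associative (@dual_add R E).
Proof. by move=> u v w; apply: dual_ext => x; rewrite !dual_lincombE; ring. Qed.

Lemma dual_addC : commutative (@dual_add R E).
Proof. by move=> u v; apply: dual_ext => x; rewrite !dual_lincombE; ring. Qed.

Lemma dual_add0 : left_id (@dual_zero R E) (@dual_add R E).
Proof. by move=> u; apply: dual_ext => x; rewrite !dual_lincombE /=; ring. Qed.

Lemma dual_addN :
  left_inverse (@dual_zero R E) (@dual_opp R E) (@dual_add R E).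
Proof. by move=> u; apply: dual_ext => x; rewrite !dual_lincombE /=; ring. Qed.

Lemma dual_scaleA a b v :
  dual_scale a (dual_scale b v) = dual_scale (a * b) v.
Proof. by apply: dual_ext => x; rewrite !dual_lincombE; ring. Qed.

Lemma dual_scale1 : left_id 1 (@dual_scale R E).
Proof. by move=> u; apply: dual_ext => x; rewrite !dual_lincombE; ring. Qed.

Lemma dual_scaleDr : right_distributive (@dual_scale R E) (@dual_add R E).
Proof. by move=> a u v; apply: dual_ext => x; rewrite !dual_lincombE; ring. Qed.

Lemma dual_scaleDl v :
  {morph (@dual_scale R E)^~ v : a b / a + b >-> dual_add a b}.
Proof. by move=> a b; apply: dual_ext => x; rewrite !dual_lincombE; ring. Qed.

End DualLmodule.

HB.instance Definition _ (R : realType) (E : tvsType R) :=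
  GRing.isZmodule.Build (dual R E)
    (@dual_addA R E) (@dual_addC R E) (@dual_add0 R E) (@dual_addN R E).
HB.instance Definition _ (R : realType) (E : tvsType R) :=
  GRing.Zmodule_isLmodule.Build R (dual R E) (@dual_scaleA R E)
    (@dual_scale1 R E) (@dual_scaleDr R E) (@dual_scaleDl R E).

Section DualEval.
Context {R : realType} {E : tvsType R}.
Implicit Types (u v : dual R E) (x : E).

Lemma add_dualE u v x : (u + v) x = u x + v x.
Proof. by rewrite /= !mul1r. Qed.
Lemma scale_dualE a u x : (a *: u) x = a * u x.
Proof. by rewrite /= mul0r addr0. Qed.
Lemma opp_dualE u x : (- u) x = - u x.
Proof. by rewrite /= mul0r addr0 mulN1r. Qed.

End DualEval.

Section WeakStar.
Context {R : realType} {E : tvsType R}.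
Local Notation D := (dual R E).

Definition weak_star_ball (s : seq E) (eps : R) : set D :=
  [set u | {in s, forall a, `|u a| < eps}].

Lemma weak_star_ball_conv s eps : conv_closed (weak_star_ball s eps).
Proof.
move=> u v t Hu Hv t01 a as_; rewrite add_dualE !scale_dualE.
exact: norm_conv_lt (Hu a as_) (Hv a as_).
Qed.

Lemma weak_star_ball_absorbing s eps :
  0 < eps -> absorbing (weak_star_ball s eps).
Proof.
move=> eps0 u; apply: near_forall_seq => a.
have := norm_lt_absorbing eps0 (u a).
by apply: filterS => t /=; rewrite mul0r addr0.
Qed.

Lemma annihilator_scalar_eval (s : seq E) (G : D -> R) :
  scalar G -> (forall u : D, {in s, forall a, u a = 0} -> G u = 0) ->
  exists d, forall u, G u = u d.
Proof.
elim: s G => [|a s IH] G Gs G_ann; first by exists 0 => u; rewrite dual0 G_ann.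
have [[u0 [u0s u0a]]|nex] :=
  pselect (exists u0 : D, {in s, forall b, u0 b = 0} /\ u0 a != 0).
  pose u1 := (u0 a)^-1 *: u0.
  have u1a : u1 a = 1 by rewrite scale_dualE mulVf.
  have u1s : {in s, forall b, u1 b = 0}.
    by move=> b bs; rewrite scale_dualE (u0s b bs) mulr0.
  pose G' u := G u - u a * G u1.
  have G's : scalar G'.
    by move=> c u v; rewrite /G' Gs add_dualE scale_dualE; ring.
  have [|d' Hd'] := IH G' G's.
    move=> u us; have : G ((- u a) *: u1 + u) = 0.
      apply: G_ann => b; rewrite in_cons => /orP[/eqP ->|bs].
        by rewrite add_dualE scale_dualE u1a; ring.
      by rewrite add_dualE scale_dualE (u1s b bs) (us b bs); ring.
    by rewrite Gs /G' => h; lra.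
  by exists (d' + G u1 *: a) => u; rewrite dualD dualZ -Hd' /G'; ring.
apply: IH => // u us; apply: G_ann => b; rewrite in_cons => /orP[/eqP ->|bs].
  by apply/eqP; apply: contraT => ua; exfalso; apply: nex; exists u.
exact: us.
Qed.

Lemma weak_star_bounded_eval {s : seq E} {eps : R} {G : D -> R} :
  0 < eps -> scalar G -> (forall u, weak_star_ball s eps u -> `|G u| <= 1) ->
  exists d, forall u, G u = u d.
Proof.
move=> eps0 Gs G_bd; apply: (@annihilator_scalar_eval s G Gs) => u us.
have Gn c : `|c * G u| <= 1.
  rewrite -(scalar_funZ Gs); apply: G_bd => a as_.
  by rewrite scale_dualE us ?mulr0 ?normr0.
apply/eqP; apply: contraT => Gu.
have := Gn (2 / `|G u|).
by rewrite normrM ger0_norm ?divr_ge0 // divfK ?normr_eq0 // => h; lra.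
Qed.

End WeakStar.

Section LocallyConvex.
Context {R : realType} {E : tvsType R}.

Lemma convex_setP (A : set E) : convex_set A -> conv_closed A.
Proof.
move=> cA x y t Ax Ay /andP[t0 t1].
have := cA x y (Itv01 t0 t1) (mem_set Ax) (mem_set Ay).
by rewrite inE; apply.
Qed.

Lemma convex_symmetric_nbhs0 {x : E} {U : set E} : nbhs x U ->
  exists U0 : set E, [/\ nbhs 0 U0, conv_closed U0,
    (forall u, U0 u -> U0 (- u)) & forall u, U0 u -> U (x + u)].
Proof.
move=> nU; have [Bs Bs_conv [Bs_open Bs_basis]] := @locally_convex R E.
have [Ob [BsOb Obx] ObU] := Bs_basis x U nU.
have nO : nbhs x Ob by apply: open_nbhs_nbhs; split => //; exact: Bs_open.
have Ob_conv := convex_setP Ob (Bs_conv Ob (mem_set BsOb)).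
pose W1 := [set u : E | Ob (x + u)]; pose W2 := [set u : E | Ob (x - u)].
have nW1 : nbhs (0 : E) W1.
  have := nbhsB (- x) nO; rewrite addNr.
  by apply: filterS => y [q Obq <-]; rewrite /W1 /= addNKr.
have nW2 : nbhs (0 : E) W2.
  by apply: filterS (nbhs0N nW1) => y [q Wq <-]; rewrite /W2 /= opprK.
exists (W1 `&` W2); split.
- exact: filterI.
- move=> u v t [Wu1 Wu2] [Wv1 Wv2] t01; split.
    by rewrite /W1 /= -{1}(conv_comb_const t x) -conv_combD; exact: Ob_conv.
  by rewrite /W2 /= -{1}(conv_comb_const t x) -conv_combB; exact: Ob_conv.
- by move=> u [Wu1 Wu2]; split; rewrite /W1 /W2 /= ?opprK.
- by move=> u [Wu1 _]; exact: ObU.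
Qed.

Lemma bounded_scalar_dual {f : E -> R} {N : set E} :
  scalar f -> nbhs 0 N -> (forall u, N u -> `|f u| <= 1) ->
  exists d : dual R E, forall x, d x = f x.
Proof.
move=> fs nN fN; suff fc : continuous (f : E -> R^o) by exists (Dual fs fc).
move=> x; apply/cvgrPdist_lt => e e0.
have e2 : e / 2 != 0 by rewrite gt_eqF // divr_gt0.
apply: filterS (nbhsT x (nbhs0Z e2 nN)) => t [y [n Nn <-] <-].
rewrite (scalar_funD fs) (scalar_funZ fs) opprD addrA subrr sub0r normrN normrM.
have e20 : 0 <= e / 2 by rewrite ltW // divr_gt0.
have := ler_wpM2l e20 (fN n Nn); rewrite ger0_norm // mulr1 => h; lra.
Qed.

End LocallyConvex.

(** * Separating a point from an epigraph *)

Section EpigraphSeparation.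
Context {R : realType} {E : tvsType R}.
Local Notation D := (dual R E).
Implicit Types (h : E * D -> \bar R).

Definition epigraph h : set ((E * D) * R^o) := [set y | (h y.1 <= y.2%:E)%E].

Lemma epigraph_conv {h} : convex_fun h -> conv_closed (epigraph h).
Proof.
move=> h_conv [[x1 u1] s1] [[x2 u2] s2] t K1 K2 /andP[t0 t1].
change (h ((t *: x1 + (1 - t) *: x2)%R, (t *: u1 + (1 - t) *: u2)%R) <=
  ((t * s1 + (1 - t) * s2)%R)%:E)%E.
have [->|tn0] := eqVneq t 0.
  by rewrite !scale0r mul0r !add0r subr0 !scale1r mul1r.
have [->|tn1] := eqVneq t 1.
  by rewrite subrr !scale0r mul0r !addr0 !scale1r mul1r.
have t01 : 0 < t < 1 by rewrite !lt_neqAle t0 t1 eq_sym tn0 tn1.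
apply: le_trans (h_conv x1 x2 u1 u2 _ t t01 _) _.
  by move=> a; rewrite add_dualE !scale_dualE.
have ht : (0 <= t%:E)%E by rewrite lee_fin.
have ht' : (0 <= (1 - t)%:E)%E by rewrite lee_fin subr_ge0.
exact: le_trans (leeD (lee_wpmul2l ht K1) (lee_wpmul2l ht' K2)) (le_refl _).
Qed.

Lemma bounded_scalar_decomp {F : (E * D) * R^o -> R} {U0 : set E}
    {s : seq E} {eps rho : R} :
  scalar F -> nbhs 0 U0 -> 0 < eps -> 0 < rho ->
  (forall b, ((U0 `*` weak_star_ball s eps) `*` [set g : R^o | `|g| < rho]) b ->
    `|F b| <= 1) ->
  exists (d : E) (d' : D) (mu : R),
    forall x v r, F ((x, v), r) = d' x + v d + mu * r.
Proof.
move=> Fs nU0 eps0 rho0 FB.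
have U00 : U0 0 := nbhs_singleton nU0.
have B00 : [set g : R^o | `|g| < rho] 0 by rewrite /= normr0.
have [d' d'E] : exists d' : D, forall x, d' x = F ((x, 0), 0).
  apply: (bounded_scalar_dual (scalar_pair_l (scalar_pair_l Fs)) nU0) => u U0u.
  by apply: FB; split => //; split=> // a _ /=; rewrite normr0.
have [d dE] : exists d : E, forall v : D, F ((0, v), 0) = v d.
  apply: (weak_star_bounded_eval eps0 (scalar_pair_r (scalar_pair_l Fs))).
  move=> v Wv; apply: FB; split; [split|].
  - exact: U00.
  - exact: Wv.
  - exact: B00.
exists d, d', (F (0, 1)) => x v r.
rewrite (scalar_pairE Fs) (scalar_pairE (scalar_pair_l Fs)) -d'E dE.
have -> : (0, r) = r *: (0, 1) :> (E * D) * R^o.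
  by congr (_, _); [rewrite scaler0 | exact/esym/mulr1].
by rewrite (scalar_funZ Fs) mulrC.
Qed.

(* Lower semicontinuity at [z] yields a convex, symmetric, absorbing box
   [B = U0 x (weak-star ball) x (-rho, rho)] with [(z, r0) + B] disjoint from
   the epigraph; then apply [separate_convex_absorbing]. *)
Lemma epigraph_separation {h} {z : E * D} {r0 : R} :
  tw_lsc h -> convex_fun h -> (r0%:E < h z)%E -> epigraph h !=set0 ->
  exists (d : E) (d' : D) (mu : R), exists2 kap : R, 0 < kap &
    forall w (s : R), (h w <= s%:E)%E ->
      d' w.1 + w.2 d + mu * s + kap <= d' z.1 + z.2 d + mu * r0.
Proof.
move: z => [zx zu] h_lsc h_conv hz epi_ne.
have [r1 r01 r1h] : exists2 r1 : R, r0 < r1 & (r1%:E < h (zx, zu))%E.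
  move: hz; case: (h (zx, zu)) => [hr| |] //=.
  - by rewrite lte_fin => hr0; exists ((r0 + hr) / 2); rewrite ?lte_fin; lra.
  - by move=> _; exists (r0 + 1); [lra | rewrite ltry].
have nz : ~ (h (zx, zu) <= r1%:E)%E.
  by move=> hr1; have := lt_le_trans r1h hr1; rewrite ltxx.
have [U [nU [s [eps [eps0 hU]]]]] := h_lsc r1 (zx, zu) nz.
have [U0 [nU0 U0_conv U0_sym U0U]] := convex_symmetric_nbhs0 nU.
have r01' : 0 < r1 - r0 by rewrite subr_gt0.
pose B := (U0 `*` weak_star_ball s eps) `*` [set g : R^o | `|g| < r1 - r0].
have B_conv : conv_closed B.
  apply: conv_closedX; last exact: norm_lt_conv.
  by apply: conv_closedX => //; exact: weak_star_ball_conv.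
have B_abs : absorbing B.
  apply: absorbingX; last exact: norm_lt_absorbing.
  apply: absorbingX; first exact: nbhs0_absorbing.
  exact: weak_star_ball_absorbing.
have B_sym b : B b -> B (- b).
  move=> [[U0b Wb] Gb]; split; [split|] => /=.
  - exact: U0_sym.
  - by move=> a as_; rewrite opp_dualE normrN; exact: Wb.
  - by rewrite normrN.
have z_sep b : B b -> ~ epigraph h ((zx, zu, r0) + b).
  move: b => [[u v] g] [[U0u Wv] Gg] epi.
  apply: (hU (zx + u) (zu + v)); first exact: U0U.
    by move=> a as_; rewrite add_dualE addrAC subrr add0r; exact: Wv.
  apply: le_trans epi _; rewrite lee_fin; change (r0 + g <= r1).
  by have gn := ler_norm g; move: Gg => /= Gg; lra.
have [F [Fs FB [tau tau0 FK]]] :=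
  separate_convex_absorbing (epigraph_conv h_conv) epi_ne
    B_conv B_abs B_sym z_sep.
have [d [d' [mu FE]]] := bounded_scalar_decomp Fs nU0 eps0 r01' FB.
exists d, d', mu, tau => // [[x v]] r hw.
by have := FK ((x, v), r) hw; rewrite !FE.
Qed.

End EpigraphSeparation.

(** * Fitzpatrick functions and representability *)

Section Fitzpatrick.
Context {R : realType} {E : tvsType R}.
Local Notation D := (dual R E).
Implicit Types (T : set (E * D)) (z p w : E * D).

Lemma fitz_ge {T} z {p} :
  T p -> ((p.2 z.1 + z.2 p.1 - p.2 p.1)%:E <= fitz T z)%E.
Proof. by move=> Tp; apply: ereal_sup_ubound; exists p. Qed.

Lemma fitz_ge_cpl {T p} : T p -> ((cpl p)%:E <= fitz T p)%E.
Proof. by move=> Tp; have := fitz_ge p Tp; rewrite addrK. Qed.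

Lemma fitz_le T z (r : R) :
  (forall p, T p -> p.2 z.1 + z.2 p.1 - p.2 p.1 <= r) -> (fitz T z <= r%:E)%E.
Proof.
by move=> H; apply: ge_ereal_sup => _ [p Tp <-]; rewrite lee_fin; exact: H.
Qed.

Lemma fitz_neq_ninfty {T} z : T !=set0 -> fitz T z != -oo%E.
Proof. by move=> [p Tp]; have := fitz_ge z Tp; case: (fitz T z). Qed.

Lemma fitz_monotone {T p} : monotone_op T -> T p -> fitz T p = (cpl p)%:E.
Proof.
move=> T_mono Tp; apply/le_anti; rewrite fitz_ge_cpl // andbT.
by apply: fitz_le => q Tq; have := T_mono p q Tp Tq; rewrite !dualB /cpl; lra.
Qed.

Definition fitz_conj T z : \bar R :=
  ereal_sup [set ((z.2 w.1 + w.2 z.1)%:E - fitz T w)%E | w in [set: E * D]].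

Lemma fitz_conj_ge T z w :
  ((z.2 w.1 + w.2 z.1)%:E - fitz T w <= fitz_conj T z)%E.
Proof. by apply: ereal_sup_ubound; exists w. Qed.

Lemma fitz_conj_ge_fitz {T} z : monotone_op T -> (fitz T z <= fitz_conj T z)%E.
Proof.
move=> T_mono; apply: ge_ereal_sup => _ [p Tp <-].
have := fitz_conj_ge T z p; rewrite (fitz_monotone T_mono Tp) /cpl -EFinB.
by rewrite [z.2 p.1 + _]addrC.
Qed.

Lemma fitz_conj_ge_cpl {T} z : monotone_op T -> T !=set0 ->
  ((cpl z)%:E <= fitz_conj T z)%E.
Proof.
move=> T_mono T_ne.
have h1 := fitz_conj_ge_fitz z T_mono; have h2 := fitz_conj_ge T z z.
case: (fitz T z) h1 h2 (fitz_neq_ninfty z T_ne) => [f| |] h1 h2 // _.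
  have [hf|hf] := leP f (cpl z); last first.
    by apply: le_trans h1; rewrite lee_fin ltW.
  by apply: le_trans h2; rewrite -EFinB lee_fin /cpl; rewrite /cpl in hf; lra.
by apply: le_trans h1; rewrite leey.
Qed.

Lemma fitz_conj_le_cpl {T p} : T p -> (fitz_conj T p <= (cpl p)%:E)%E.
Proof.
move=> Tp; apply: ge_ereal_sup => _ [w _ <-].
have := fitz_ge w Tp; case: (fitz T w) => [f| |] hf //; last by rewrite leNye.
by rewrite -EFinB lee_fin; rewrite lee_fin in hf; rewrite /cpl; lra.
Qed.

Lemma fitz_conj_convex T : T !=set0 -> convex_fun (fitz_conj T).
Proof.
move=> T_ne x1 x2 u1 u2 w t /andP[t0 t1] Hw; apply: ge_ereal_sup => _ [q _ <-].
have hq1 := fitz_conj_ge T (x1, u1) q; have hq2 := fitz_conj_ge T (x2, u2) q.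
have ht : (0 <= t%:E)%E by rewrite lee_fin ltW.
have ht' : (0 <= (1 - t)%:E)%E by rewrite lee_fin subr_ge0 ltW.
case: (fitz T q) hq1 hq2 (fitz_neq_ninfty q T_ne) => [f| |] h1 h2 // _.
  apply: le_trans (leeD (lee_wpmul2l ht h1) (lee_wpmul2l ht' h2)).
  rewrite /= Hw dualD !dualZ -!EFinD lee_fin.
  by rewrite le_eqVlt; apply/orP; left; apply/eqP; ring.
by rewrite /= leNye.
Qed.

Lemma fitz_conj_lsc T : T !=set0 -> tw_lsc (fitz_conj T).
Proof.
move=> T_ne r z hz.
have : (r%:E < fitz_conj T z)%E by rewrite ltNge; apply/negP.
case/ereal_sup_gt => _ [w _ <-] hw.
case Ef: (fitz T w) hw (fitz_neq_ninfty w T_ne) => [f| |] hw // _.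
rewrite -EFinB lte_fin in hw.
pose dl := (z.2 w.1 + w.2 z.1 - f - r) / 2.
have dl0 : 0 < dl by rewrite /dl divr_gt0 // subr_gt0.
exists [set x | `|w.2 z.1 - w.2 x| < dl]; split.
  by have := @dfun_cont R E w.2 z.1; move/cvgrPdist_lt => /(_ dl dl0).
exists [:: w.1], dl; split => // x u Ux Hu Hle.
have := Hu w.1 (mem_head _ _); have := fitz_conj_ge T (x, u) w.
rewrite Ef -EFinB => h1 h2.
have := le_trans h1 Hle; rewrite lee_fin /= => h3.
move: Ux; rewrite /= ltr_norml => /andP[Ux1 Ux2].
move: h2; rewrite ltr_norml => /andP[h21 h22].
have dldef : 2 * dl = z.2 w.1 + w.2 z.1 - f - r by rewrite /dl; field.
by clear -dldef h3 Ux1 Ux2 h21 h22; lra.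
Qed.

Lemma fitz_conj_repr {T} :
  monotone_op T -> T !=set0 -> repr_class (fitz_conj T).
Proof.
move=> T_mono T_ne; split.
- split.
    by move=> z; have := fitz_conj_ge_cpl z T_mono T_ne; case: fitz_conj.
  have [p Tp] := T_ne; exists p.
  by have := fitz_conj_le_cpl Tp; case: fitz_conj.
- exact: fitz_conj_convex.
- exact: fitz_conj_lsc.
- by move=> z; exact: fitz_conj_ge_cpl.
Qed.

End Fitzpatrick.

Section Perturbation.
Context {R : realType} {E : tvsType R}.
Local Notation D := (dual R E).
Context {S : set (E * D)} {x : E} {xs : D} {d : E} {d' : D} {mu kap : R}.
Hypothesis S_sep : forall p, S p ->
  d' p.1 + p.2 d + mu * cpl p + kap <= d' x + xs d + mu * cpl (x, xs).
Hypothesis fitz_x : (fitz S (x, xs) <= (cpl (x, xs))%:E)%E.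

Let e := d + mu *: x.
Let es := d' + mu *: xs.

(* For [p] in [S] let [cq := (xs - p.2) (x - p.1)], nonnegative by [fitz_x].
   At the moved point, [cpl] exceeds the term of [p] in [fitz] by
   [cq + t L + t ^ 2 es e], where [L >= kap + mu cq] by [S_sep]. *)
Lemma fitz_perturbed_le {t} : 0 <= t -> 0 <= 1 + t * mu ->
  (fitz S ((x + t *: e)%R, (xs + t *: es)%R) <=
    (cpl (x + t *: e, xs + t *: es) - t * (t * es e + kap))%R%:E)%E.
Proof.
move=> t0 tmu; apply: fitz_le => -[a as_] Sp /=.
have hsep := S_sep _ Sp; rewrite /cpl /= in hsep.
have hcq : as_ x + xs a - as_ a <= xs x.
  by rewrite -lee_fin; apply: le_trans (fitz_ge (x, xs) Sp) fitz_x.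
have h1 : 0 <= (1 + t * mu) * (xs x - as_ x - xs a + as_ a).
  by rewrite mulr_ge0 //; lra.
have h2 : 0 <= t * (d' x + xs d - d' a - as_ d - kap - mu * as_ a + mu * xs x).
  by rewrite mulr_ge0 //; lra.
rewrite /cpl /= /e /es !(dualD, dualZ, add_dualE, scale_dualE).
lra.
Qed.

Lemma fitz_perturbed_lt {t} :
  0 < t -> 0 <= 1 + t * mu -> t * `|es e| < kap ->
  (fitz S ((x + t *: e)%R, (xs + t *: es)%R) <
    (cpl (x + t *: e, xs + t *: es))%:E)%E.
Proof.
move=> t0 tmu tes; apply: le_lt_trans.
  exact: fitz_perturbed_le (ltW t0) tmu.
rewrite lte_fin gtrBl; apply: mulr_gt0 => //.
have := ler_wpM2l (ltW t0) (lerNnormlW (lexx `|es e|)); rewrite mulrN; lra.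
Qed.

End Perturbation.

Lemma restr_neq0 {R : realType} {E : tvsType R}
    {T : set (E * dual R E)} {V : set E} :
  V `&` dom T !=set0 -> restr T V !=set0.
Proof. by move=> [x [Vx [u Tu]]]; exists (x, u). Qed.

Section Implications.
Context {R : realType} {E : tvsType R}.
Local Notation D := (dual R E).
Variables (T : set (E * D)) (V : set E).
Local Notation S := (restr T V).

Lemma identifies_representable : V `&` dom T !=set0 -> monotone_op S ->
  V_identifies V T -> V_representable T V.
Proof.
move=> hVT S_mono idT; split => //; exists (fitz_conj S).
split; first exact: fitz_conj_repr S_mono (restr_neq0 hVT).
move=> z; split.
  move=> [hz Vz]; split => //; apply: idT => //.
  by rewrite -hz; exact: fitz_conj_ge_fitz.
move=> Sz; split; last exact: Sz.2.
apply/le_anti; rewrite fitz_conj_le_cpl //=.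
exact: fitz_conj_ge_cpl (restr_neq0 hVT).
Qed.

Lemma identifies_locates : V_identifies V T -> V_locates V T.
Proof. by move=> idT x [u hu] Vx; exists u; exact: idT (x, u) hu Vx. Qed.

Lemma locates_NI : V_locates V T -> V_NI T V.
Proof.
move=> loc [x xs] /= Vx; rewrite leNgt; apply/negP => hlt.
have [|u Tu] := loc x _ Vx; first by exists xs; exact: ltW.
have := fitz_ge (x, xs) (conj Tu Vx : S (x, u)).
rewrite /= [u x + _]addrC addrK => h.
by have := lt_le_trans hlt h; rewrite ltxx.
Qed.

(* For [p, q] in [S = [h = cpl]], convexity of [h] at their midpoint gives
   [cpl ((p + q) / 2) <= (cpl p + cpl q) / 2], which expands to
   [0 <= (p.2 - q.2) (p.1 - q.1)]. *)
Lemma representable_monotone : V_representable T V -> monotone_op S.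
Proof.
move=> [_ [h [[_ h_conv _ h_ge] hS]]] [p1 p2] [q1 q2] Sp Sq /=.
have h_cpl r : S r -> h r = (cpl r)%:E by move=> Sr; exact: ((hS r).2 Sr).1.
have half : 0 < (2 : R)^-1 < 1 by rewrite invr_gt0 invf_lt1 //; lra.
have := h_conv p1 q1 p2 q2 (2^-1 *: p2 + (1 - 2^-1) *: q2) _ half.
move=> /(_ (fun a => ltac:(by rewrite add_dualE !scale_dualE))).
rewrite (h_cpl _ Sp) (h_cpl _ Sq) => H.
have := le_trans (h_ge _) H; rewrite /cpl /= -!EFinD lee_fin.
rewrite !dualD !dualZ ?dualN => H2.
lra.
Qed.

Lemma representable_NI_identifies : V `&` dom T !=set0 -> alg_open V ->
  V_representable T V -> V_NI T V -> V_identifies V T.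
Proof.
move=> hVT aoV [_ [h [[_ h_conv h_lsc h_ge] hS]]] ni [x xs] fitz_x Vx.
apply: contrapT => nTz.
have h_cpl p : S p -> h p = (cpl p)%:E by move=> Sp; exact: ((hS p).2 Sp).1.
have hz : ((cpl (x, xs))%:E < h (x, xs))%E.
  rewrite lt_neqAle h_ge andbT; apply/eqP => e; apply: nTz.
  exact: ((hS (x, xs)).1 (conj (esym e) Vx)).1.
have epi_ne : epigraph h !=set0.
  have [p Sp] := restr_neq0 hVT.
  by exists (p, cpl p); rewrite /epigraph /= h_cpl.
have [d [d' [mu [kap kap0 sep]]]] := epigraph_separation h_lsc h_conv hz epi_ne.
have S_sep p : S p ->
    d' p.1 + p.2 d + mu * cpl p + kap <= d' x + xs d + mu * cpl (x, xs).
  by move=> Sp; apply: sep; rewrite h_cpl.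
pose e := d + mu *: x; pose es := d' + mu *: xs.
have [delta delta0 V_delta] := aoV x Vx e.
have [t t0 [[t_delta t_mu] t_es]] : exists2 t : R, 0 < t &
    (`|t * 1| < delta /\ `|t * mu| < 1) /\ `|t * `|es e| | < kap.
  by apply: near0_gt0; apply: filterI; first apply: filterI;
    apply: norm_lt_absorbing.
rewrite mulr1 gtr0_norm // in t_delta.
rewrite normrM normr_id gtr0_norm // in t_es.
have t_mu' : 0 <= 1 + t * mu.
  by move: t_mu; rewrite ltr_norml => /andP[? _]; lra.
have Vt : V (x + t *: e) by apply: V_delta; rewrite (ltW t0) ltW.
have := fitz_perturbed_lt S_sep fitz_x t0 t_mu' t_es.
move=> /(le_lt_trans (ni (_, _) Vt)).
by rewrite ltxx.
Qed.

End Implications.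

Theorem theorem3p1 (R : realType) (E : tvsType R)
    (hE : hausdorff_space E) (ntE : exists x : E, x != 0)
    (T : set (E * dual R E)) (V : set E) (hVT : V `&` dom T !=set0) :
  let c1 := in_M (restr T V) /\ V_identifies V T in
  let c2 := V_representable T V /\ V_locates V T in
  let c3 := V_representable T V /\ V_NI T V in
  [/\ c1 -> c2, c2 -> c3 & alg_open V -> (c3 -> c1)].
Proof.
move=> c1 c2 c3; split.
- move=> [[S_mono _] idT]; split; first exact: identifies_representable.
  exact: identifies_locates.
- by move=> [rep loc]; split; last exact: locates_NI.
- move=> aoV [rep ni]; split; last exact: representable_NI_identifies.
  by split; [exact: representable_monotone | exact: restr_neq0].
Qed.
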